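(* Assume $\mathbb Q\subset k$, let $R=\operatorname{End}_k(A)$ and $D\in\mathcal U^p(R;\Delta)$. The following are equivalent: (a) $D\in\operatorname{HS}^p_k(A;\Delta)$; (b) $\varepsilon^{\mathfrak d}(D)\in\operatorname{Der}_k(A)[[{\bf s}]]_\Delta$ for every $k$-derivation $\mathfrak d:k[[{\bf s}]]_\Delta\to k[[{\bf s}]]_\Delta$; (c) $\varepsilon(D)\in\operatorname{Der}_k(A)[[{\bf s}]]_\Delta$.
   Context: $k$ is a commutative ring, $A$ a commutative $k$-algebra, $R=\operatorname{End}_k(A)$; ${\bf s}=\{s_1,\dots,s_p\}$ commuting variables, ${\bf s}^\alpha=s_1^{\alpha_1}\cdots s_p^{\alpha_p}$, $|\alpha|=\sum\alpha_i$. A co-ideal is a non-empty $\Delta\subset\mathbb N^p$ with $\alpha\in\Delta,\alpha'\le\alpha$ (componentwise) $\Rightarrow\alpha'\in\Delta$. For a ring/group $M$, $M[[{\bf s}]]_\Delta$ is the set of formal sums $\sum_{\alpha\in\Delta}m_\alpha{\bf s}^\alpha$ (truncated product for rings, variables central). $\mathcal U^p(R;\Delta)$ is the group of $r\in R[[{\bf s}]]_\Delta$ with $r_0=1$, $r^*$ the inverse. For a $k$-derivation $\mathfrak d$ of $k[[{\bf s}]]_\Delta$, $\mathfrak d_R(\sum r_\alpha{\bf s}^\alpha)=\sum r_\alpha\mathfrak d({\bf s}^\alpha)$ and $\varepsilon^{\mathfrak d}(r)=r^*\mathfrak d_R(r)$; $\varepsilon(r)=\varepsilon^{\boldsymbol\chi}(r)=r^*\sum_\alpha|\alpha|r_\alpha{\bf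 s}^\alpha$, where $\boldsymbol\chi=\sum_is_i\partial/\partial s_i$. $\operatorname{HS}^p_k(A;\Delta)$ is the set of $D=\sum_{\alpha\in\Delta}D_\alpha{\bf s}^\alpha\in R[[{\bf s}]]_\Delta$ with $D_0=\mathrm{Id}_A$ and $D_\alpha(xy)=\sum_{\beta+\gamma=\alpha}D_\beta(x)D_\gamma(y)$ for all $x,y\in A$, $\alpha\in\Delta$. *)

From HB Require Import structures.
From mathcomp Require Import all_boot all_order all_algebra.
Set Implicit Arguments. Unset Strict Implicit. Unset Printing Implicit Defensive.
Import GRing.Theory.
Local Open Scope ring_scope.

Definition midx (p : nat) := 'I_p -> nat.

Section Defs.
Variable p : nat.

Definition msize (a : midx p) : nat := (\sum_(i < p) a i)%N.
Definition mzero : midx p := fun _ => 0%N.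
Definition misz (a : midx p) : bool := [forall i, a i == 0%N].
Definition mle (a b : midx p) : bool := [forall i, (a i <= b i)%N].
Definition msub (a b : midx p) : midx p := fun i => (a i - b i)%N.
Definition mi_of (N : nat) (b : {ffun 'I_p -> 'I_N}) : midx p :=
  fun i => nat_of_ord (b i).

Definition coideal (Delta : pred (midx p)) : Prop :=
  (exists a, Delta a) /\
  (forall a a', Delta a -> (forall i, (a' i <= a i)%N) -> Delta a').

(* sum over all decompositions beta + gamma = alpha of F beta gamma
   (beta ranges over all beta <= alpha, each exactly once) *)
Definition conv (V : nmodType) (a : midx p) (F : midx p -> midx p -> V) : V :=
  \sum_(b : {ffun 'I_p -> 'I_(msize a).+1} | mle (mi_of b) a)
     F (mi_of b) (msub a (mi_of b)).

(* the monomial s^alpha, as a power series with coefficients in k *)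
Definition mono (k : nzSemiRingType) (a : midx p) : midx p -> k :=
  fun b => if [forall i, b i == a i] then 1 else 0.

(* truncated product in k[[s]] (meaningful modulo Delta) *)
Definition smul (k : nzSemiRingType) (f g : midx p -> k) : midx p -> k :=
  fun a => conv a (fun b c => f b * g c).

Definition eqD (Delta : pred (midx p)) (T : Type) (f g : midx p -> T) : Prop :=
  forall a, Delta a -> f a = g a.

(* k-derivations of k[[s]]_Delta, acting on representatives *)
Definition isSDer (k : comNzRingType) (Delta : pred (midx p))
    (d : (midx p -> k) -> (midx p -> k)) : Prop :=
  (forall f g, eqD Delta f g -> eqD Delta (d f) (d g)) /\
  (forall (c : k) f g,
      eqD Delta (d (fun a => c * f a + g a)) (fun a => c * d f a + d g a)) /\
  (forall f g,
      eqD Delta (d (smul f g)) (fun a => smul (d f) g a + smul f (d g) a)).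

Definition klinear (k : comNzRingType) (A : lmodType k) (f : A -> A) : Prop :=
  forall (c : k) x y, f (c *: x + y) = c *: f x + f y.

Definition isDer (k : comNzRingType) (A : comAlgType k) (f : A -> A) : Prop :=
  klinear f /\ forall x y : A, f (x * y) = x * f y + f x * y.

Section Series.
Variables (k : comNzRingType) (A : comAlgType k).

Definition inU (Delta : pred (midx p)) (D : midx p -> A -> A) : Prop :=
  (forall a, Delta a -> klinear (D a)) /\ (forall x, D mzero x = x).

Definition isHS (Delta : pred (midx p)) (D : midx p -> A -> A) : Prop :=
  (forall a, Delta a -> klinear (D a)) /\ (forall x, D mzero x = x) /\
  (forall a, Delta a -> forall x y : A,
      D a (x * y) = conv a (fun b c => D b x * D c y)).

(* inverse D^* of D (with D_0 = Id), by the recursion coming from D^* D = 1: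
   D^*_0 = Id, D^*_a = - sum_{b + c = a, c <> 0} D^*_b o D_c.
   The fuel argument n is msize a. *)
Fixpoint sinv_aux (D : midx p -> A -> A) (n : nat) (a : midx p) (x : A) : A :=
  match n with
  | 0 => x
  | n'.+1 => if misz a then x
             else - conv a (fun b c => if misz c then 0
                                       else sinv_aux D n' b (D c x))
  end.

Definition sinv (D : midx p -> A -> A) (a : midx p) (x : A) : A :=
  sinv_aux D (msize a) a x.

(* d_R(r) = sum_alpha r_alpha d(s^alpha); the coefficient at nu only involves
   alpha with |alpha| <= |nu| + 1 (d(s^alpha) has order >= |alpha| - 1), so the
   sum is taken over the finite box alpha_i <= |nu|+1, containing all of them. *)
Definition dR (d : (midx p -> k) -> (midx p -> k)) (r : midx p -> A -> A)
    (nu : midx p) (x : A) : A :=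
  \sum_(b : {ffun 'I_p -> 'I_(msize nu).+2}) d (mono k (mi_of b)) nu *: r (mi_of b) x.

Definition epsd (d : (midx p -> k) -> (midx p -> k)) (D : midx p -> A -> A)
    (a : midx p) (x : A) : A :=
  conv a (fun b c => sinv D b (dR d D c x)).

Definition eps (D : midx p -> A -> A) (a : midx p) (x : A) : A :=
  conv a (fun b c => sinv D b (D c x *+ msize c)).

End Series.
End Defs.

(* Write D^* for the inverse of D in R[[s]]_Delta.  If D is a Hasse-Schmidt
   derivation and d a derivation of k[[s]]_Delta, then d_R(D) satisfies the
   twisted Leibniz rule d_R(D)(xy) = sum d_R(D)(x) D(y) + D(x) d_R(D)(y),
   because d is a derivation on monomials s^(b+c) = s^b s^c; composing with
   D^* turns it into a family of derivations, since D applied to the Leibniz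
   defect of D^* d_R(D) vanishes and D_0 = Id lets one induct on |alpha|.
   The Euler derivation chi = sum s_i d/ds_i gives chi_R(D) = D eps(D).
   Conversely, if eps(D) consists of derivations, then D eps(D) = chi_R(D)
   shows, by induction on |alpha|, that |alpha| times the Hasse-Schmidt
   defect of D_alpha is zero; as |alpha| is invertible in k, the defect is. *)

From HB Require Import structures.
From mathcomp Require Import all_boot all_order all_algebra.
From Stdlib Require Import FunctionalExtensionality.
From mathcomp Require Import zify.
Set Implicit Arguments. Unset Strict Implicit. Unset Printing Implicit Defensive.
Import GRing.Theory.
Local Open Scope ring_scope.

Local Notation box p N := {ffun 'I_p -> 'I_N}.

Section MultiIndex.
Variable p : nat.
Local Notation M := (midx p).
Implicit Types (a b c x y : M).

Definition madd x y : M := fun i => (x i + y i)%N.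
Definition meq x y : bool := [forall i, x i == y i].

Lemma meqP x y : reflect (x = y) (meq x y).
Proof.
apply: (iffP forallP) => [h|->] //; apply: functional_extensionality => i; exact/eqP.
Qed.

Lemma meq_sym x y : meq x y = meq y x.
Proof. by apply/meqP/meqP => ->. Qed.

Lemma maddC x y : madd x y = madd y x.
Proof. by apply: functional_extensionality => i; rewrite /madd addnC. Qed.

Lemma maddA x y z : madd x (madd y z) = madd (madd x y) z.
Proof. by apply: functional_extensionality => i; rewrite /madd addnA. Qed.

Lemma msize_add x y : msize (madd x y) = (msize x + msize y)%N.
Proof. by rewrite /msize /madd big_split. Qed.

Lemma coord_le_msize a i : (a i <= msize a)%N.
Proof. by rewrite /msize (bigD1 i) //= leq_addr. Qed.

Lemma coord_lt_msizeS a : [forall i, a i < (msize a).+1]%N.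
Proof. by apply/forallP => i; rewrite ltnS coord_le_msize. Qed.

Lemma coord_lt_msizeSS a : [forall i, a i < (msize a).+2]%N.
Proof. by apply/forallP => i; rewrite ltnS leqW // coord_le_msize. Qed.

Lemma mle_refl a : mle a a. Proof. by apply/forallP. Qed.
Lemma mle0m a : mle (@mzero p) a. Proof. by apply/forallP. Qed.
Lemma mle_msub a b : mle (msub a b) a.
Proof. by apply/forallP => i; rewrite /msub leq_subr. Qed.

Lemma msize_mle b a : mle b a -> (msize b <= msize a)%N.
Proof. by move=> /forallP h; rewrite /msize; apply: leq_sum => i _; exact: h. Qed.

Lemma msubm0 a : msub a (@mzero p) = a.
Proof. by apply: functional_extensionality => i; rewrite /msub subn0. Qed.

Lemma msubKC b a : mle b a -> madd b (msub a b) = a.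
Proof.
move=> /forallP h; apply: functional_extensionality => i.
by rewrite /madd /msub subnKC //; exact: h.
Qed.

Lemma msize_msub b a : mle b a -> msize a = (msize b + msize (msub a b))%N.
Proof. by move=> hb; rewrite -msize_add msubKC. Qed.

Lemma msize_msubE b a : mle b a -> msize (msub a b) = (msize a - msize b)%N.
Proof. by move=> hb; rewrite (msize_msub hb) addKn. Qed.

Lemma meq_madd b c a : meq (madd b c) a = mle b a && meq c (msub a b).
Proof.
apply/idP/andP => [/meqP <-|[/forallP hle /forallP heq]].
  by split; apply/forallP => i; rewrite /madd /msub ?leq_addr ?addKn.
by apply/forallP => i; rewrite /madd (eqP (heq i)) /msub subnKC //; exact: hle.
Qed.

Lemma madd_bound x y a N : [forall i, a i < N]%N -> meq (madd x y) a ->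
  [forall i, x i < N]%N.
Proof.
move=> /forallP h /meqP e; apply/forallP => i.
by apply: leq_ltn_trans (h i); rewrite -e /madd leq_addr.
Qed.

Lemma miszP x : reflect (x = @mzero p) (misz x).
Proof. exact: meqP. Qed.

Lemma misz_msize x : misz x = (msize x == 0)%N.
Proof. by rewrite /msize sum_nat_eq0. Qed.

Lemma mle_mzero b : mle b (@mzero p) -> b = @mzero p.
Proof.
move=> /forallP h; apply: functional_extensionality => i.
by apply/eqP; rewrite -leqn0; exact: h.
Qed.

Lemma msize_msub_ltn b a : mle b a -> ~~ misz b -> (msize (msub a b) < msize a)%N.
Proof. by move=> hb; rewrite (msize_msub hb) misz_msize -lt0n; lia. Qed.

Lemma msize_ltn_msub b a : mle b a -> ~~ misz (msub a b) -> (msize b < msize a)%N.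
Proof. by move=> hb; rewrite (msize_msub hb) misz_msize -lt0n; lia. Qed.

Lemma msub_eq_mzero b a : mle b a -> msub a b = a -> b = @mzero p.
Proof.
move=> hb e; apply/miszP; rewrite misz_msize.
by have := msize_msub hb; rewrite e; lia.
Qed.

Lemma coideal_mle (Delta : pred M) a b : coideal Delta -> Delta a -> mle b a -> Delta b.
Proof. by move=> [_ h] Da /forallP hb; apply: h Da _ => i; exact: hb. Qed.

Lemma coideal_mzero (Delta : pred M) : coideal Delta -> Delta (@mzero p).
Proof. by move=> [[a Da] h]; apply: h Da _. Qed.

Lemma msize_ind_in (Delta : pred M) (P : M -> Prop) :
  (forall a, Delta a -> (forall c, Delta c -> (msize c < msize a)%N -> P c) -> P a) ->
  forall a, Delta a -> P a.
Proof.
move=> h a; move: (leqnn (msize a)); move: {2}(msize a) => n.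
elim: n a => [|n IH] a ha Da; apply: h => // c Dc hc; first by move: (leq_trans hc ha).
by apply: IH => //; rewrite -ltnS (leq_trans hc ha).
Qed.

End MultiIndex.

Section Convolution.
Variables (p : nat) (V : nmodType).
Local Notation M := (midx p).
Implicit Types (a b c g : M).

Lemma sum_box_delta N g (H : M -> V) :
  \sum_(b : box p N) (if meq (mi_of b) g then H (mi_of b) else 0)
  = if [forall i, g i < N]%N then H g else 0.
Proof.
case: forallP => [hg|hg].
  pose b0 : box p N := [ffun i => Ordinal (hg i)].
  have e0 : mi_of b0 = g.
    by apply: functional_extensionality => i; rewrite /mi_of ffunE.
  rewrite (bigD1 b0) //= e0 (introT (meqP g g)) // big1 ?addr0 // => b nb.
  case: meqP => // eb; case/eqP: nb; apply/ffunP => i; apply/val_inj.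
  by rewrite ffunE /= -eb.
rewrite big1 // => b _; case: meqP => // eb.
by case: hg => i; rewrite -eb; exact: ltn_ord.
Qed.

Lemma sum_box_resize N1 N2 (P : pred M) (G : M -> V) :
  (forall g, P g -> [forall i, g i < N1]%N && [forall i, g i < N2]%N) ->
  \sum_(b : box p N1 | P (mi_of b)) G (mi_of b) =
  \sum_(b : box p N2 | P (mi_of b)) G (mi_of b).
Proof.
move=> hP.
transitivity (\sum_(b : box p N1 | P (mi_of b)) \sum_(c : box p N2)
    (if meq (mi_of c) (mi_of b) then G (mi_of c) else 0)).
  by apply: eq_bigr => b Pb; rewrite sum_box_delta; case/andP: (hP _ Pb) => _ ->.
rewrite exchange_big /= [RHS]big_mkcond /=; apply: eq_bigr => c _.
rewrite big_mkcond /=.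
transitivity (\sum_(b : box p N1) (if meq (mi_of b) (mi_of c) then
                 (if P (mi_of c) then G (mi_of c) else 0) else 0)).
  apply: eq_bigr => b _; case: (meqP (mi_of b) (mi_of c)) => [->|ne].
    by rewrite (introT (meqP _ _)).
  by case: meqP => [e|]; [case: ne|case: (P _)].
rewrite (sum_box_delta N1 (mi_of c) (fun _ => if P (mi_of c) then G (mi_of c) else 0)).
case Pc: (P (mi_of c)); last by case: ifP.
by case/andP: (hP _ Pc) => ->.
Qed.

Lemma sum_box_resize_supp N1 N2 (G : M -> V) :
  (forall g, G g != 0 -> [forall i, g i < N1]%N && [forall i, g i < N2]%N) ->
  \sum_(b : box p N1) G (mi_of b) = \sum_(b : box p N2) G (mi_of b).
Proof.
move=> h.
have nz N : \sum_(b : box p N) G (mi_of b) =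
            \sum_(b : box p N | G (mi_of b) != 0) G (mi_of b).
  by rewrite [RHS]big_mkcond; apply: eq_bigr => b _; case: eqP => // ->.
by rewrite !nz; apply: (@sum_box_resize N1 N2 (fun g => G g != 0) G).
Qed.

Lemma conv_box a N (F : M -> M -> V) : [forall i, a i < N]%N ->
  conv a F = \sum_(b : box p N)
               (if mle (mi_of b) a then F (mi_of b) (msub a (mi_of b)) else 0).
Proof.
move=> /forallP haN; rewrite -big_mkcond /=.
rewrite /conv (@sum_box_resize _ N (fun g => mle g a) (fun g => F g (msub a g))) //.
move=> g /forallP hg; apply/andP; split; apply/forallP => i.
  exact: leq_trans (hg i) (coord_le_msize a i).
exact: leq_ltn_trans (hg i) (haN i).
Qed.

Lemma conv_box2 a N (F : M -> M -> V) : [forall i, a i < N]%N ->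
  conv a F = \sum_(b : box p N) \sum_(c : box p N)
     (if meq (madd (mi_of b) (mi_of c)) a then F (mi_of b) (mi_of c) else 0).
Proof.
move=> haN; rewrite (conv_box _ haN); apply: eq_bigr => b _.
under eq_bigr => c _ do rewrite meq_madd.
case: ifP => hle; last by rewrite big1.
rewrite sum_box_delta; case: forallP => // -[] i.
by move/forallP: haN => /(_ i); apply: leq_ltn_trans; exact: leq_subr.
Qed.

Lemma convC a (F : M -> M -> V) : conv a F = conv a (fun b c => F c b).
Proof.
rewrite !(conv_box2 _ (coord_lt_msizeS a)) exchange_big /=.
by apply: eq_bigr => c _; apply: eq_bigr => b _; rewrite maddC.
Qed.

Lemma exchange_big_pairs (I J K L : finType) (F : I -> J -> K -> L -> V) :
  \sum_(i : I) \sum_(j : J) \sum_(x : K) \sum_(y : L) F i j x y =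
  \sum_(x : K) \sum_(y : L) \sum_(j : J) \sum_(i : I) F i j x y.
Proof.
rewrite exchange_big /=.
under eq_bigr => j _ do rewrite exchange_big /=.
under eq_bigr => j _ do under eq_bigr => x _ do rewrite exchange_big /=.
by rewrite exchange_big /=; under eq_bigr => x _ do rewrite exchange_big /=.
Qed.

Definition conv3 N a (f : M -> M -> M -> V) :=
  \sum_(x : box p N) \sum_(y : box p N) \sum_(z : box p N)
    (if meq (madd (madd (mi_of x) (mi_of y)) (mi_of z)) a
     then f (mi_of x) (mi_of y) (mi_of z) else 0).

Lemma conv_convl N a f : [forall i, a i < N]%N ->
  conv a (fun b c => conv b (fun b1 b2 => f b1 b2 c)) = conv3 N a f.
Proof.
move=> haN; rewrite (conv_box2 _ haN).
transitivity (\sum_(b : box p N) \sum_(c : box p N) \sum_(x : box p N) \sum_(y : box p N)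
   (if meq (mi_of b) (madd (mi_of x) (mi_of y)) then
     (if meq (madd (madd (mi_of x) (mi_of y)) (mi_of c)) a
      then f (mi_of x) (mi_of y) (mi_of c) else 0)
    else 0)).
  apply: eq_bigr => b _; apply: eq_bigr => c _.
  case: ifP => hbc.
    rewrite (conv_box2 _ (madd_bound haN hbc)).
    apply: eq_bigr => x _; apply: eq_bigr => y _.
    by rewrite meq_sym; case: meqP => [e|//]; rewrite -e hbc.
  rewrite big1 // => x _; rewrite big1 // => y _.
  by case: meqP => [<-|]; rewrite ?hbc.
rewrite exchange_big_pairs /conv3.
apply: eq_bigr => x _; apply: eq_bigr => y _; apply: eq_bigr => z _.
rewrite (sum_box_delta N (madd (mi_of x) (mi_of y)) (fun=> if _ then _ else _)).
case: ifP => // hb; case: ifP => // hc.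
by rewrite (madd_bound haN hc) in hb.
Qed.

Lemma conv_convr N a f : [forall i, a i < N]%N ->
  conv a (fun b c => conv c (fun c1 c2 => f b c1 c2)) = conv3 N a f.
Proof.
move=> haN; rewrite (conv_box2 _ haN).
transitivity (\sum_(b : box p N) \sum_(c : box p N) \sum_(x : box p N) \sum_(y : box p N)
   (if meq (mi_of c) (madd (mi_of x) (mi_of y)) then
     (if meq (madd (madd (mi_of b) (mi_of x)) (mi_of y)) a
      then f (mi_of b) (mi_of x) (mi_of y) else 0)
    else 0)).
  apply: eq_bigr => b _; apply: eq_bigr => c _.
  case: ifP => hbc.
    have hc : [forall i, mi_of c i < N]%N.
      by rewrite maddC in hbc; exact: madd_bound haN hbc.
    rewrite (conv_box2 _ hc); apply: eq_bigr => x _; apply: eq_bigr => y _.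
    by rewrite meq_sym; case: meqP => [e|//]; rewrite -maddA -e hbc.
  rewrite big1 // => x _; rewrite big1 // => y _.
  by case: meqP => [e|//]; rewrite -maddA -e hbc.
rewrite /conv3; apply: eq_bigr => b _.
rewrite exchange_big /=; under eq_bigr => x _ do rewrite exchange_big /=.
apply: eq_bigr => x _; apply: eq_bigr => y _.
rewrite (sum_box_delta N (madd (mi_of x) (mi_of y)) (fun=> if _ then _ else _)).
case: ifP => // hb; case: ifP => // hc.
by rewrite -maddA maddC in hc; rewrite (madd_bound haN hc) in hb.
Qed.

Lemma conv_convA a (f : M -> M -> M -> V) :
  conv a (fun b c => conv b (fun b1 b2 => f b1 b2 c)) =
  conv a (fun b c => conv c (fun c1 c2 => f b c1 c2)).
Proof.
by rewrite (conv_convl _ (coord_lt_msizeS a)) (conv_convr _ (coord_lt_msizeS a)).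
Qed.

Lemma conv_conv_swap a (f : M -> M -> M -> V) :
  conv a (fun b c => conv b (fun b1 b2 => f b1 b2 c)) =
  conv a (fun b c => conv b (fun b1 b2 => f b1 c b2)).
Proof.
rewrite !(conv_convl _ (coord_lt_msizeS a)) /conv3; apply: eq_bigr => x _.
rewrite exchange_big /=; apply: eq_bigr => z _; apply: eq_bigr => y _.
by rewrite -!maddA (maddC (mi_of y)).
Qed.

Lemma conv_ext a (F G : M -> M -> V) :
  (forall b, mle b a -> F b (msub a b) = G b (msub a b)) -> conv a F = conv a G.
Proof. by move=> h; apply: eq_bigr => b hb; rewrite h. Qed.

Lemma convD a (F G : M -> M -> V) :
  conv a (fun b c => F b c + G b c) = conv a F + conv a G.
Proof. by rewrite /conv big_split. Qed.

Lemma conv_eq0 a (F : M -> M -> V) : (forall b c, F b c = 0) -> conv a F = 0.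
Proof. by move=> h; rewrite /conv big1. Qed.

Lemma convB (W : zmodType) a (F G : M -> M -> W) :
  conv a (fun b c => F b c - G b c) = conv a F - conv a G.
Proof. by rewrite /conv sumrB. Qed.

Lemma conv_mulrn_msize a (F : M -> M -> V) :
  conv a F *+ msize a =
  conv a (fun b c => F b c *+ msize b) + conv a (fun b c => F b c *+ msize c).
Proof.
rewrite -convD /conv -sumrMnl; apply: eq_bigr => b hb.
by rewrite -mulrnDr -msize_add msubKC.
Qed.

Lemma conv_unitl a u (G : M -> V) :
  conv a (fun b c => if meq b u then G c else 0) =
  if mle u a then G (msub a u) else 0.
Proof.
rewrite /conv big_mkcond /=.
transitivity (\sum_(b : box p (msize a).+1) (if meq (mi_of b) u then
    (if mle u a then G (msub a u) else 0) else 0)).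
  by apply: eq_bigr => b _; case: (meqP (mi_of b) u) => [->|]; case: ifP.
rewrite (sum_box_delta _ u (fun=> if mle u a then G (msub a u) else 0)).
case: ifP => //; case: ifP => // /forallP h /forallP [] i.
by rewrite ltnS (leq_trans (h i) (coord_le_msize a i)).
Qed.

Lemma conv_unitr a u (G : M -> V) :
  conv a (fun b c => if meq c u then G b else 0) =
  if mle u a then G (msub a u) else 0.
Proof. by rewrite convC conv_unitl. Qed.

Lemma conv_mzero (F : M -> M -> V) : conv (@mzero p) F = F (@mzero p) (@mzero p).
Proof.
rewrite (conv_ext (G := fun b c =>
  if meq b (@mzero p) then F (@mzero p) (@mzero p) else 0)).
  by rewrite conv_unitl mle0m.
by move=> b /mle_mzero ->; rewrite msubm0 (introT (meqP _ _)).
Qed.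

End Convolution.

Section LinearMaps.
Variables (k : comNzRingType) (A : lmodType k) (p : nat).
Implicit Types (f g : A -> A).

Lemma klinD f : klinear f -> forall x y, f (x + y) = f x + f y.
Proof. by move=> h x y; have := h 1 x y; rewrite !scale1r. Qed.

Lemma klin0 f : klinear f -> f 0 = 0.
Proof.
move=> h; have e := klinD h 0 0; rewrite addr0 in e.
by apply: (@addrI _ (f 0)); rewrite addr0 -e.
Qed.

Lemma klinB f : klinear f -> forall x y, f (x - y) = f x - f y.
Proof.
move=> h x y; apply/eqP; rewrite eq_sym subr_eq -klinD //.
by rewrite subrK.
Qed.

Lemma klin_sum f (I : Type) (r : seq I) (P : pred I) (F : I -> A) :
  klinear f -> f (\sum_(i <- r | P i) F i) = \sum_(i <- r | P i) f (F i).
Proof. by move=> h; apply: (big_morph f (klinD h) (klin0 h)). Qed.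

Lemma klin_conv f (a : midx p) (F : midx p -> midx p -> A) :
  klinear f -> f (conv a F) = conv a (fun b c => f (F b c)).
Proof. exact: klin_sum. Qed.

Lemma klin_comp f g : klinear f -> klinear g -> klinear (fun x => f (g x)).
Proof. by move=> hf hg c x y; rewrite hg hf. Qed.

Lemma klin_convF (a : midx p) (F : midx p -> midx p -> A -> A) :
  (forall b c, klinear (F b c)) -> klinear (fun x => conv a (fun b c => F b c x)).
Proof.
move=> h c0 x y; rewrite /conv scaler_sumr -big_split /=.
by apply: eq_bigr => b _; rewrite h.
Qed.

End LinearMaps.

Section SeriesComposition.
Variables (k : comNzRingType) (A : comAlgType k) (p : nat).
Local Notation M := (midx p).
Implicit Types (U W E : M -> A -> A) (a b c : M).

Definition scomp U W a x := conv a (fun b c => U b (W c x)).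
Definition sone a (x : A) := if misz a then x else 0.

Lemma klinear_scomp U W a : (forall b, klinear (U b)) -> (forall c, klinear (W c)) ->
  klinear (scomp U W a).
Proof. by move=> hU hW; apply: klin_convF => b c; exact: klin_comp. Qed.

Lemma scompA U W E : (forall b, klinear (U b)) ->
  forall a x, scomp U (scomp W E) a x = scomp (scomp U W) E a x.
Proof.
move=> hU a x; rewrite /scomp.
rewrite (conv_ext (G := fun b c => conv c (fun c1 c2 => U b (W c1 (E c2 x))))).
  exact: (esym (conv_convA a (fun b c1 c2 => U b (W c1 (E c2 x))))).
by move=> b _; rewrite klin_conv.
Qed.

Lemma scomps1 U : (forall b, klinear (U b)) -> forall a x, scomp U sone a x = U a x.
Proof.
move=> hU a x; rewrite /scomp /sone.
rewrite (conv_ext (G := fun b c => if meq c (@mzero p) then U b x else 0)).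
  by rewrite conv_unitr mle0m msubm0.
by move=> b _; rewrite -[meq _ _]/(misz _); case: ifP; rewrite ?klin0.
Qed.

Lemma scomp1s U a x : scomp sone U a x = U a x.
Proof. by rewrite /scomp /sone conv_unitl mle0m msubm0. Qed.

Lemma sinv_aux_fuel U n m a x : (msize a <= n)%N -> (msize a <= m)%N ->
  sinv_aux U n a x = sinv_aux U m a x.
Proof.
have misz_le0 b : (msize b <= 0)%N -> misz b by rewrite misz_msize leqn0.
elim: n m a x => [|n IH] [|m] a x //=.
- by move=> /misz_le0 ->.
- by move=> _ /misz_le0 ->.
move=> hn hm; case: ifP => // _; congr (- _); apply: conv_ext => b hb.
case: ifP => // /negbT hc; have := msize_ltn_msub hb hc.
by move=> lt_ba; apply: IH; rewrite -ltnS; apply: leq_trans lt_ba _.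
Qed.

Lemma sinvE U a x : ~~ misz a ->
  sinv U a x = - conv a (fun b c => if misz c then 0 else sinv U b (U c x)).
Proof.
rewrite /sinv misz_msize; case e: (msize a) => [|n] //= _.
rewrite (_ : misz a = false); last by rewrite misz_msize e.
congr (- _); apply: conv_ext => b hb; case: ifP => // /negbT hc.
by apply: sinv_aux_fuel => //; rewrite -ltnS -e; exact: msize_ltn_msub.
Qed.

Lemma sinv_mzero U x : sinv U (@mzero p) x = x.
Proof. by rewrite /sinv; case: (msize _) => //= n; rewrite (introT (miszP _)). Qed.

Lemma klinear_sinv U : (forall c, klinear (U c)) -> forall a, klinear (sinv U a).
Proof.
move=> hU a; rewrite /sinv; move: (msize a) => n.
elim: n a => [|n IH] b c0 x y //=.
case: (misz b) => //.
rewrite (@klin_convF _ _ _ b (fun b c z => if misz c then 0 else sinv_aux U n b (U c z))).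
  by rewrite scalerN opprD.
move=> b1 c1; case: (misz c1); first by move=> ? ? ?; rewrite scaler0 addr0.
exact: klin_comp.
Qed.

Lemma scomp_sinvl U : (forall x, U (@mzero p) x = x) ->
  forall a x, scomp (sinv U) U a x = sone a x.
Proof.
move=> hU0 a x; rewrite /scomp /sone; case: (boolP (misz a)) => [/miszP ->|ha].
  by rewrite conv_mzero sinv_mzero hU0.
rewrite (conv_ext (G := fun b c => (if meq c (@mzero p) then sinv U b x else 0) +
                          (if misz c then 0 else sinv U b (U c x)))).
  by rewrite convD conv_unitr mle0m msubm0 sinvE // addNr.
move=> b _; rewrite -[meq _ _]/(misz _).
by case: ifP => [/miszP ->|_]; rewrite ?hU0 ?(introT (miszP _)) ?addr0 ?add0r.
Qed.

Lemma sinvK U : (forall c, klinear (U c)) -> (forall x, U (@mzero p) x = x) ->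
  sinv (sinv U) = U.
Proof.
move=> hU hU0; set S := sinv U.
have hT := klinear_sinv (klinear_sinv hU).
apply: functional_extensionality => a; apply: functional_extensionality => x.
transitivity (scomp (sinv S) (scomp S U) a x).
  by rewrite -(scomps1 hT); apply: conv_ext => b _; rewrite scomp_sinvl.
rewrite scompA // -(scomp1s U); apply: conv_ext => b _.
by rewrite scomp_sinvl // => y; exact: sinv_mzero.
Qed.

Lemma scomp_sinvr U : (forall c, klinear (U c)) -> (forall x, U (@mzero p) x = x) ->
  forall a x, scomp U (sinv U) a x = sone a x.
Proof.
move=> hU hU0 a x; rewrite -{1}(sinvK hU hU0).
by apply: scomp_sinvl => y; exact: sinv_mzero.
Qed.

Lemma scomp_sinvK U E : (forall c, klinear (U c)) -> (forall x, U (@mzero p) x = x) ->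
  forall a x, scomp U (scomp (sinv U) E) a x = E a x.
Proof.
move=> hU hU0 a x; rewrite scompA // -(scomp1s E).
by apply: conv_ext => b _; rewrite scomp_sinvr.
Qed.

End SeriesComposition.

Section ConvolutionProducts.
Variables (p : nat) (R : pzSemiRingType).
Local Notation M := (midx p).

Lemma conv_mull_conv a (P : M -> R) (Q : M -> M -> R) :
  conv a (fun b c => conv b (fun b1 b2 => P b1 * Q b2 c)) =
  conv a (fun b c => P b * conv c Q).
Proof.
rewrite (conv_convA a (fun b1 b2 c => P b1 * Q b2 c)).
by apply: conv_ext => b _; rewrite /conv mulr_sumr.
Qed.

Lemma conv_mulr_conv a (P : M -> R) (Q : M -> M -> R) :
  conv a (fun b c => conv b (fun b1 b2 => Q b1 c * P b2)) =
  conv a (fun b c => conv b Q * P c).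
Proof.
rewrite (conv_conv_swap a (fun b1 b2 c => Q b1 c * P b2)).
by apply: conv_ext => b _; rewrite /conv mulr_suml.
Qed.

End ConvolutionProducts.

Section HasseSchmidt.
Variables (k : comNzRingType) (A : comAlgType k) (p : nat).
Local Notation M := (midx p).
Variables (Delta : pred M) (U : M -> A -> A).
Hypotheses (hDelta : coideal Delta) (hU : forall c, klinear (U c))
  (hU0 : forall x, U (@mzero p) x = x).

Lemma der_scomp_sinv (E : M -> A -> A) :
  (forall a, Delta a -> forall x y, U a (x * y) = conv a (fun b c => U b x * U c y)) ->
  (forall a, Delta a -> forall x y,
     E a (x * y) = conv a (fun b c => E b x * U c y + U b x * E c y)) ->
  forall a, Delta a -> forall x y,
  scomp (sinv U) E a (x * y) = x * scomp (sinv U) E a y + scomp (sinv U) E a x * y.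
Proof.
move=> hHS hE a0 Da0 x y.
set F := scomp (sinv U) E.
pose G c := F c (x * y) - (x * F c y + F c x * y).
have FK c z : scomp U F c z = E c z by exact: scomp_sinvK.
have HS_mull a : Delta a ->
    conv a (fun b c => U b (x * F c y)) = conv a (fun b c => U b x * E c y).
  move=> Da; rewrite [LHS](conv_ext
    (G := fun b c => conv b (fun b1 b2 => U b1 x * U b2 (F c y)))).
    by rewrite conv_mull_conv; apply: conv_ext => b _; rewrite -FK.
  by move=> b hb; rewrite hHS //; exact: coideal_mle hDelta Da hb.
have HS_mulr a : Delta a ->
    conv a (fun b c => U b (F c x * y)) = conv a (fun b c => E b x * U c y).
  move=> Da; rewrite [LHS](conv_ext
    (G := fun b c => conv b (fun b1 b2 => U b1 (F c x) * U b2 y))).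
    by rewrite conv_mulr_conv; apply: conv_ext => b _; rewrite -FK.
  by move=> b hb; rewrite hHS //; exact: coideal_mle hDelta Da hb.
(* U annihilates the Leibniz defect G of U^* E; as U_0 = Id, G = 0 by induction. *)
have UG_eq0 a : Delta a -> conv a (fun b c => U b (G c)) = 0.
  move=> Da; rewrite (conv_ext (G := fun b c => U b (F c (x * y)) -
                                  (U b (x * F c y) + U b (F c x * y)))); last first.
    by move=> b _; rewrite klinB // klinD.
  rewrite convB convD -/(scomp U F a (x * y)) FK HS_mull // HS_mulr // hE // convD.
  by rewrite [X in _ - X]addrC subrr.
suff: G a0 = 0 by move/eqP; rewrite subr_eq0 => /eqP.
move: a0 Da0; apply: (msize_ind_in (Delta := Delta)) => a Da IH.
rewrite -(UG_eq0 a Da) (conv_ext (G := fun b c => if meq c a then G a else 0)).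
  by rewrite conv_unitr mle_refl.
move=> b hb; case: meqP => e; first by rewrite e (msub_eq_mzero hb e) hU0.
rewrite IH ?klin0 //; first exact: coideal_mle hDelta Da (mle_msub a b).
apply: msize_msub_ltn => //; apply/negP => /miszP eb; apply: e.
by rewrite eb msubm0.
Qed.

Lemma scomp_eps a z : scomp U (eps U) a z = U a z *+ msize a.
Proof. exact: (@scomp_sinvK _ _ _ U (fun c w => U c w *+ msize c)). Qed.

Lemma eps_mzero z : eps U (@mzero p) z = 0.
Proof.
rewrite /eps conv_mzero (_ : msize _ = 0%N) ?mulr0n ?klin0 //; last first.
  by apply/eqP; rewrite -misz_msize; apply/miszP.
exact: klinear_sinv.
Qed.

Lemma HS_of_eps_der : (forall n : nat, exists y : k, y * (n.+1)%:R = 1) ->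
  (forall a, Delta a -> forall x y, eps U a (x * y) = x * eps U a y + eps U a x * y) ->
  forall a, Delta a -> forall x y, U a (x * y) = conv a (fun b c => U b x * U c y).
Proof.
move=> hinv hder; apply: (msize_ind_in (Delta := Delta)) => a Da IH x y.
have [/miszP ->|nz] := boolP (misz a); first by rewrite conv_mzero !hU0.
apply/eqP; rewrite -subr_eq0; apply/eqP; set v := _ - _.
suff hv : v *+ msize a = 0.
  have [y0 hy0] := hinv (msize a).-1.
  rewrite prednK ?lt0n -?misz_msize // in hy0.
  by rewrite -[v]scale1r -hy0 -scalerA scaler_nat hv scaler0.
have expand : scomp U (eps U) a (x * y) =
    conv a (fun b c => conv b (fun b1 b2 => U b1 x * U b2 (eps U c y))) +
    conv a (fun b c => conv b (fun b1 b2 => U b1 (eps U c x) * U b2 y)).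
  rewrite -convD; apply: conv_ext => b hb.
  rewrite hder ?klinD //; last exact: coideal_mle hDelta Da (mle_msub a b).
  have [/miszP ->|nzc] := boolP (misz (msub a b)).
    rewrite !eps_mzero mulr0 mul0r klin0 // !conv_eq0 ?addr0 // => b1 b2.
      by rewrite klin0 ?mul0r.
    by rewrite klin0 ?mulr0.
  have Db := coideal_mle hDelta Da hb; have lt_ba := msize_ltn_msub hb nzc.
  by rewrite !IH.
rewrite /v mulrnBl -scomp_eps expand conv_mull_conv conv_mulr_conv conv_mulrn_msize.
rewrite [X in _ - X]addrC; apply/eqP; rewrite subr_eq0; apply/eqP; congr (_ + _).
  by apply: conv_ext => b _; rewrite -mulrnAr -scomp_eps.
by apply: conv_ext => b _; rewrite -mulrnAl -scomp_eps.
Qed.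

End HasseSchmidt.

Section Monomials.
Variables (k : nzSemiRingType) (p : nat).
Local Notation M := (midx p).
Implicit Types (f : M -> k) (a b u v : M).

Lemma mono_neq b a : ~~ meq a b -> mono k b a = 0.
Proof. by rewrite /mono -/(meq a b) => /negbTE ->. Qed.

Lemma smul_monol f u a : smul (mono k u) f a = if mle u a then f (msub a u) else 0.
Proof.
rewrite /smul -conv_unitl; apply: eq_bigr => b _.
by rewrite /mono -/(meq _ u); case: ifP; rewrite ?mul1r ?mul0r.
Qed.

Lemma smul_monor f u a : smul f (mono k u) a = if mle u a then f (msub a u) else 0.
Proof.
rewrite /smul convC -conv_unitl; apply: eq_bigr => b _.
by rewrite /mono -/(meq _ u); case: ifP; rewrite ?mulr1 ?mulr0.
Qed.

Lemma mono_madd u v : mono k (madd u v) = smul (mono k u) (mono k v).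
Proof.
apply: functional_extensionality => a; rewrite smul_monol.
rewrite /mono -/(meq a (madd u v)) -/(meq (msub a u) v) meq_sym meq_madd.
by case: (mle u a) => //=; rewrite meq_sym.
Qed.

End Monomials.

Section SeriesDerivations.
Variables (k : comNzRingType) (p : nat).
Local Notation M := (midx p).
Variables (Delta : pred M) (d : (M -> k) -> (M -> k)).
Hypotheses (hDelta : coideal Delta) (hd : isSDer Delta d).

Lemma sder_eq0 (f : M -> k) : (forall a, Delta a -> f a = 0) ->
  forall a, Delta a -> d f a = 0.
Proof.
case: hd => hext [hlin _] hf a Da; rewrite (hext f (fun _ => 0) hf a Da).
have e := hlin 1 (fun _ => 0) (fun _ => 0) a Da.
rewrite (hext _ (fun _ => 0) _ a Da) ?mul1r in e.
  by apply: (@addrI _ (d (fun _ => 0) a)); rewrite addr0 -e.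
by move=> ? _ /=; rewrite ?mulr0 addr0.
Qed.

Lemma sder_mono_out b : ~~ Delta b -> forall a, Delta a -> d (mono k b) a = 0.
Proof.
move=> nb; apply: sder_eq0 => a Da; apply: mono_neq.
by apply/negP => /meqP ea; move: nb; rewrite -ea Da.
Qed.

Definition unitm (i : 'I_p) : M := fun j => nat_of_bool (j == i).

Lemma msize_unitm i : msize (unitm i) = 1%N.
Proof. by rewrite /msize (bigD1 i) //= /unitm eqxx big1 // => j /negbTE ->. Qed.

Lemma sder_mono_order b a : Delta a -> ((msize a).+1 < msize b)%N -> d (mono k b) a = 0.
Proof.
move: (leqnn (msize b)); move: {2}(msize b) => n.
elim: n b a => [|n IH] b a hb Da hab; first by move: hb hab; lia.
have [i hi] : exists i, (0 < b i)%N.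
  case: (boolP [exists i, 0 < b i]%N) => [/existsP[i hi]|/existsPn h]; first by exists i.
  have : misz b by apply/forallP => i; have := h i; rewrite lt0n negbK.
  by rewrite misz_msize => /eqP e; rewrite e in hab.
have hle : mle (unitm i) b.
  by apply/forallP => j; rewrite /unitm; case: (j == i) /eqP => [->|].
have sb' : msize (msub b (unitm i)) = (msize b - 1)%N by rewrite msize_msubE ?msize_unitm.
case: hd => _ [_ hleib].
rewrite -(msubKC hle) mono_madd (hleib _ _ a Da) smul_monor smul_monol.
case: ifP => [/msize_mle h1|_]; first by move: h1 hab; rewrite sb'; lia.
case: ifP => [hea|_]; last by rewrite addr0.
have hsa := msize_mle hea; rewrite msize_unitm in hsa.
rewrite IH ?addr0 //.
- by rewrite sb'; move: hb; lia.
- exact: coideal_mle hDelta Da (mle_msub a _).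
- by rewrite msize_msubE // msize_unitm sb'; move: hab hsa; lia.
Qed.

Lemma sder_mono_madd u v a : Delta a ->
  d (mono k (madd u v)) a =
  (if mle v a then d (mono k u) (msub a v) else 0) +
  (if mle u a then d (mono k v) (msub a u) else 0).
Proof. by move=> Da; rewrite mono_madd hd.2.2 // smul_monor smul_monol. Qed.

End SeriesDerivations.

Section InducedDerivation.
Variables (k : comNzRingType) (A : comAlgType k) (p : nat).
Local Notation M := (midx p).
Variables (Delta : pred M) (d : (M -> k) -> (M -> k)) (U : M -> A -> A).
Hypotheses (hDelta : coideal Delta) (hd : isSDer Delta d).

Lemma dR_box a x N : Delta a -> ((msize a).+2 <= N)%N ->
  dR d U a x = \sum_(b : box p N) d (mono k (mi_of b)) a *: U (mi_of b) x.
Proof.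
move=> Da hN.
apply: (@sum_box_resize_supp p A _ N (fun g => d (mono k g) a *: U g x)) => g hg.
have hs : (msize g <= (msize a).+1)%N.
  rewrite leqNgt; apply/negP => hlt; move: hg.
  by rewrite (sder_mono_order hDelta hd Da hlt) scale0r eqxx.
have hgi := coord_le_msize g.
by apply/andP; split; apply/forallP => i; have := hgi i; lia.
Qed.

Lemma klinear_dR : (forall c, klinear (U c)) -> forall a, klinear (dR d U a).
Proof.
move=> hU a c0 x y; rewrite /dR scaler_sumr -big_split /=; apply: eq_bigr => b _.
by rewrite hU scalerDr !scalerA mulrC.
Qed.

Local Notation N a := (msize (a : M)).+2.

Lemma dR_HS_expand a x y : Delta a ->
  (forall b, Delta b -> U b (x * y) = conv b (fun b1 b2 => U b1 x * U b2 y)) ->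
  dR d U a (x * y) = \sum_(b1 : box p (N a)) \sum_(b2 : box p (N a))
     d (mono k (madd (mi_of b1) (mi_of b2))) a *: (U (mi_of b1) x * U (mi_of b2) y).
Proof.
move=> Da hHS.
transitivity (\sum_(b : box p (N a)) \sum_(b1 : box p (N a)) \sum_(b2 : box p (N a))
     (if meq (mi_of b) (madd (mi_of b1) (mi_of b2)) then
        d (mono k (madd (mi_of b1) (mi_of b2))) a *: (U (mi_of b1) x * U (mi_of b2) y)
      else 0)).
  apply: eq_bigr => b _; case: (boolP (Delta (mi_of b))) => Db; last first.
    rewrite (sder_mono_out hd Db Da) scale0r big1 // => b1 _; rewrite big1 // => b2 _.
    by case: meqP => // <-; rewrite (sder_mono_out hd Db Da) scale0r.
  have hb : [forall i, mi_of b i < N a]%N by apply/forallP => i; exact: ltn_ord.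
  rewrite hHS // (conv_box2 _ hb) scaler_sumr; apply: eq_bigr => b1 _.
  rewrite scaler_sumr; apply: eq_bigr => b2 _.
  by rewrite meq_sym; case: meqP => [->|_]; rewrite ?scaler0.
rewrite exchange_big /=; apply: eq_bigr => b1 _.
rewrite exchange_big /=; apply: eq_bigr => b2 _.
rewrite (sum_box_delta _ _ (fun=> d (mono k _) a *: _)).
case: forallP => // /forallP /forallPn [i hi].
rewrite (sder_mono_order hDelta hd Da) ?scale0r //.
by have := coord_le_msize (madd (mi_of b1) (mi_of b2)) i; move: hi; lia.
Qed.

Lemma conv_mull_dR a x y : Delta a ->
  conv a (fun b c => U b x * dR d U c y) =
  \sum_(b1 : box p (N a)) \sum_(b2 : box p (N a))
    (if mle (mi_of b1) a then d (mono k (mi_of b2)) (msub a (mi_of b1)) else 0) *: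
    (U (mi_of b1) x * U (mi_of b2) y).
Proof.
move=> Da; rewrite (conv_box _ (coord_lt_msizeSS a)); apply: eq_bigr => b1 _.
case: ifP => hle; last by rewrite big1 // => b2 _; rewrite scale0r.
rewrite (@dR_box _ _ (N a) (coideal_mle hDelta Da (mle_msub a _))); last first.
  by rewrite !ltnS msize_mle ?mle_msub.
by rewrite mulr_sumr; apply: eq_bigr => b2 _; rewrite scalerAr.
Qed.

Lemma conv_mulr_dR a x y : Delta a ->
  conv a (fun b c => dR d U b x * U c y) =
  \sum_(b1 : box p (N a)) \sum_(b2 : box p (N a))
    (if mle (mi_of b2) a then d (mono k (mi_of b1)) (msub a (mi_of b2)) else 0) *:
    (U (mi_of b1) x * U (mi_of b2) y).
Proof.
move=> Da; rewrite convC (conv_box _ (coord_lt_msizeSS a)) exchange_big /=.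
apply: eq_bigr => b2 _; case: ifP => hle; last by rewrite big1 // => b1 _; rewrite scale0r.
rewrite (@dR_box _ _ (N a) (coideal_mle hDelta Da (mle_msub a _))); last first.
  by rewrite !ltnS msize_mle ?mle_msub.
by rewrite mulr_suml; apply: eq_bigr => b1 _; rewrite scalerAl.
Qed.

Lemma dR_leibniz a x y : Delta a ->
  (forall b, Delta b -> U b (x * y) = conv b (fun b1 b2 => U b1 x * U b2 y)) ->
  dR d U a (x * y) = conv a (fun b c => dR d U b x * U c y + U b x * dR d U c y).
Proof.
move=> Da hHS; rewrite convD conv_mulr_dR // conv_mull_dR // dR_HS_expand //.
rewrite -big_split; apply: eq_bigr => b1 _; rewrite -big_split; apply: eq_bigr => b2 _.
by rewrite (sder_mono_madd hd) // scalerDl.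
Qed.

End InducedDerivation.

Section Euler.
Variables (k : comNzRingType) (A : comAlgType k) (p : nat).
Local Notation M := (midx p).

Definition euler (f : M -> k) : M -> k := fun a => f a *+ msize a.

Lemma isSDer_euler (Delta : pred M) : isSDer Delta euler.
Proof.
split; first by move=> f g h a Da; rewrite /euler h.
split; first by move=> c f g a _; rewrite /euler mulrnDl mulrnAr.
move=> f g a _; rewrite /euler /smul conv_mulrn_msize.
by congr (_ + _); apply: conv_ext => b _; rewrite ?mulrnAl ?mulrnAr.
Qed.

Lemma dR_euler (U : M -> A -> A) c x : dR euler U c x = U c x *+ msize c.
Proof.
have -> : U c x *+ msize c = \sum_(b : box p (msize c).+2)
    (if meq (mi_of b) c then U c x *+ msize c else 0).
  by rewrite (sum_box_delta _ _ (fun=> U c x *+ msize c)) coord_lt_msizeSS.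
apply: eq_bigr => b _; rewrite /euler /mono -/(meq c (mi_of b)) meq_sym.
by case: meqP => [->|_]; rewrite ?scaler_nat // mul0rn scale0r.
Qed.

Lemma epsd_euler (U : M -> A -> A) : epsd euler U = eps U.
Proof.
apply: functional_extensionality => a; apply: functional_extensionality => x.
by apply: conv_ext => b _; rewrite dR_euler.
Qed.

End Euler.

Section Restriction.
Variables (k : comNzRingType) (A : comAlgType k) (p : nat).
Local Notation M := (midx p).
Variables (Delta : pred M) (hDelta : coideal Delta).
Implicit Types (U W : M -> A -> A).

(* D is arbitrary outside Delta; restricting it makes every coefficient
   k-linear without changing anything the theorem looks at. *)
Definition restrict U c : A -> A := if Delta c then U c else fun=> 0.

Lemma restrictE U c : Delta c -> restrict U c = U c.
Proof. by rewrite /restrict => ->. Qed.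

Lemma klinear_restrict U : inU Delta U -> forall c, klinear (restrict U c).
Proof.
move=> [hlin _] c; rewrite /restrict; case: ifP => [/hlin //|_] c0 x y.
by rewrite scaler0 addr0.
Qed.

Lemma restrict_mzero U : inU Delta U -> forall x, restrict U (@mzero p) x = x.
Proof. by move=> [_ h0] x; rewrite restrictE ?h0 //; exact: coideal_mzero. Qed.

Section AgreeOnDelta.
Variables U W : M -> A -> A.
Hypothesis eUW : forall c, Delta c -> U c = W c.

Lemma conv_eqD a (F : (A -> A) -> (A -> A) -> A) : Delta a ->
  conv a (fun b c => F (U b) (U c)) = conv a (fun b c => F (W b) (W c)).
Proof.
move=> Da; apply: conv_ext => b hb.
by rewrite !eUW //; apply: coideal_mle hDelta Da _; rewrite ?mle_msub.
Qed.

Lemma isHS_eqD : isHS Delta U -> isHS Delta W.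
Proof.
move=> [hlin [h0 hHS]]; split; [|split].
- by move=> a Da; rewrite -eUW //; exact: hlin.
- by move=> x; rewrite -eUW //; exact: coideal_mzero.
- move=> a Da x y; rewrite -eUW // hHS //.
  exact: (conv_eqD (fun f g => f x * g y)).
Qed.

Lemma sinv_eqD a : Delta a -> sinv U a = sinv W a.
Proof.
move=> Da; apply: functional_extensionality => x; rewrite /sinv.
move: (msize a) => n; elim: n a Da x => [|n IH] b Db x //=.
case: ifP => // _; congr (- _); apply: conv_ext => b1 hb1; case: ifP => // _.
by rewrite IH ?eUW //; apply: coideal_mle hDelta Db _; rewrite ?mle_msub.
Qed.

Lemma eps_eqD a : Delta a -> eps U a = eps W a.
Proof.
move=> Da; apply: functional_extensionality => x; apply: conv_ext => b hb.
by rewrite sinv_eqD ?eUW //; apply: coideal_mle hDelta Da _; rewrite ?mle_msub.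
Qed.

Lemma epsd_eqD d : isSDer Delta d -> forall a, Delta a -> epsd d U a = epsd d W a.
Proof.
move=> hd a Da; apply: functional_extensionality => x; apply: conv_ext => b hb.
rewrite sinv_eqD; last exact: coideal_mle hDelta Da hb.
congr (sinv W b _); apply: eq_bigr => g _.
have [Dg|Dg] := boolP (Delta (mi_of g)); first by rewrite eUW.
by rewrite (sder_mono_out hd Dg (coideal_mle hDelta Da (mle_msub a b))) !scale0r.
Qed.

End AgreeOnDelta.

Lemma epsd_der_of_HS d U : (forall c, klinear (U c)) -> isHS Delta U -> isSDer Delta d ->
  forall a, Delta a -> isDer (epsd d U a).
Proof.
move=> hU [_ [hU0 hHS]] hd a Da; split.
  exact: (@klinear_scomp _ _ _ (sinv U) (dR d U) a (klinear_sinv hU) (klinear_dR d hU)).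
apply: (der_scomp_sinv (Delta := Delta)) => // b Db x y.
by apply: (dR_leibniz (Delta := Delta)) => // ? ?; exact: hHS.
Qed.

End Restriction.

Theorem mainTheorem13 (k : comNzRingType) (A : comAlgType k) (p : nat)
    (Delta : pred (midx p)) (D : midx p -> A -> A) :
  (forall n : nat, exists y : k, y * (n.+1)%:R = 1) ->
  coideal Delta ->
  inU Delta D ->
  (isHS Delta D <->
     (forall d : (midx p -> k) -> (midx p -> k), isSDer Delta d ->
        forall a, Delta a -> isDer (epsd d D a))) /\
  (isHS Delta D <-> (forall a, Delta a -> isDer (eps D a))).
Proof.
move=> hinv hDelta hD.
set D' := restrict Delta D.
have eD' c : Delta c -> D' c = D c by exact: restrictE.
have eD c (Dc : Delta c) : D c = D' c by rewrite eD'.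
have hD' := klinear_restrict hD; have hD'0 := restrict_mzero hDelta hD.
have HS_epsd : isHS Delta D -> forall d, isSDer Delta d ->
    forall a, Delta a -> isDer (epsd d D a).
  move=> /(isHS_eqD hDelta eD) hHS d hd a Da.
  by rewrite -(epsd_eqD hDelta eD' hd Da); exact: (epsd_der_of_HS hDelta).
have epsd_eps : (forall d, isSDer Delta d -> forall a, Delta a -> isDer (epsd d D a)) ->
    forall a, Delta a -> isDer (eps D a).
  by move=> h a Da; rewrite -epsd_euler; exact: h (isSDer_euler _ _) a Da.
have eps_HS : (forall a, Delta a -> isDer (eps D a)) -> isHS Delta D.
  move=> h; apply: (isHS_eqD hDelta eD'); split => //; split => //.
  apply: HS_of_eps_der => // a Da x y.
  by rewrite (eps_eqD hDelta eD' Da); case: (h a Da).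
split; split.
- exact: HS_epsd.
- by move/epsd_eps/eps_HS.
- by move/HS_epsd/epsd_eps.
- exact: eps_HS.
Qed.
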